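(* Let $\widehat K_5$ be the complete graph $K_5$ (vertices $w_1,\dots,w_5$) with a pendant vertex $v_i$ attached to each $w_i$, and let $S(\widehat K_5)$ be its full edge subdivision. Let $S(\widehat K_5)(A)$ and $S(\widehat K_5)(B)$ be obtained from $S(\widehat K_5)$ by identifying the (formerly pendant) degree-one vertices $v_1,\dots,v_5$ block-wise according to the $2$-partitions $A=\{2,3\}$ and $B=\{1,4\}$ of $5$ (blocks of sizes $2,3$, resp. $1,4$, each become one vertex; all edges kept). Then these two graphs, each with $22$ vertices, are non-isomorphic, and their standard Laplacians both have spectrum $$0,\ w_-,\ z_-^{(4)},\ \widehat w_-,\ 1^{(8)},\ \widehat w_+,\ z_+^{(4)},\ w_+,\ 2,$$ where $w_\pm=1\pm\frac12\sqrt{\frac{9+\sqrt{21}}{5}}$, $\widehat w_\pm=1\pm\frac12\sqrt{\frac{9-\sqrt{21}}{5}}$, $z_\pm=1\pm\sqrt{\frac25}$, and exponents $(m)$ denote multiplicities; in particular they are isospectral for the standard Laplacian (and, being bipartite, for the signless standard Laplacian).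
   Context: The edge subdivision of a graph $G$, denoted $S(G)$, replaces every edge $\{u,v\}$ by a new vertex $w$ and two edges $\{u,w\},\{w,v\}$. The standard Laplacian of a graph is $(\Delta_G f)(v)=f(v)-\frac{1}{\deg v}\sum_{u\in N_v}f(u)$ and the signless standard Laplacian is $(\Delta_{G^+}f)(v)=f(v)+\frac{1}{\deg v}\sum_{u\in N_v}f(u)$, where $N_v$ is the set of neighbours of $v$ and $\deg v=|N_v|$. *)

From HB Require Import structures.
From mathcomp Require Import all_boot all_order all_algebra.
Set Implicit Arguments. Unset Strict Implicit. Unset Printing Implicit Defensive.
Import Order.TTheory GRing.Theory Num.Theory.
Local Open Scope ring_scope.

Definition nbhd (T : finType) (adj : rel T) (v : T) : {set T} := [set u | adj v u].
Definition deg (T : finType) (adj : rel T) (v : T) : nat := #|nbhd adj v|.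

Definition stdLap (R : fieldType) (T : finType) (adj : rel T) : 'M[R]_#|T| :=
  \matrix_(i, j) ((i == j)%:R
     - (adj (enum_val i) (enum_val j))%:R / (deg adj (enum_val i))%:R).

Definition signlessLap (R : fieldType) (T : finType) (adj : rel T) : 'M[R]_#|T| :=
  \matrix_(i, j) ((i == j)%:R
     + (adj (enum_val i) (enum_val j))%:R / (deg adj (enum_val i))%:R).

Definition isomorphic (T1 T2 : finType) (adj1 : rel T1) (adj2 : rel T2) : Prop :=
  exists f : T1 -> T2, bijective f /\ forall x y, adj2 (f x) (f y) = adj1 x y.

(* Its vertices are
     - w_i                      (i : 'I_5),
     - m_{ij} for each K5-edge {w_i,w_j}, i<j (subdivision vertex),
     - p_i for each pendant edge {w_i,v_i}   (subdivision vertex),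
     - v_i.
   S(K5-hat)(P): identify the v_i according to a 2-partition of {0..4},
   encoded by a block map part : 'I_5 -> bool; the two blocks become the
   two vertices [vb false], [vb true]. *)

Definition K5edge := {p : 'I_5 * 'I_5 | (p.1 < p.2)%N}.

Definition SK5V : finType := (('I_5 + K5edge) + ('I_5 + bool))%type.

Definition wv (i : 'I_5) : SK5V := inl (inl i).
Definition mv (e : K5edge) : SK5V := inl (inr e).
Definition pv (i : 'I_5) : SK5V := inr (inl i).
Definition vb (b : bool) : SK5V := inr (inr b).

Definition SK5half (part : 'I_5 -> bool) (x y : SK5V) : bool :=
  match x, y with
  | inl (inl i), inl (inr e) => (i == (val e).1) || (i == (val e).2)  (* w_i - m_{ij} - w_j *)
  | inl (inl i), inr (inl j) => i == j                              (* w_i - p_i *)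
  | inr (inl j), inr (inr b) => part j == b                         (* p_j - [v_j] *)
  | _, _ => false
  end.

Definition SK5adj (part : 'I_5 -> bool) : rel SK5V :=
  fun x y => SK5half part x y || SK5half part y x.

(* A = {2,3}: v_0,v_1 form one block, v_2,v_3,v_4 the other. *)
Definition partA (i : 'I_5) : bool := (i < 2)%N.
(* B = {1,4}: v_0 alone, v_1,...,v_4 form the other block. *)
Definition partB (i : 'I_5) : bool := (i < 1)%N.

Definition adjA : rel SK5V := SK5adj partA.
Definition adjB : rel SK5V := SK5adj partB.

Definition w_m (R : rcfType) : R := 1 - 2^-1 * Num.sqrt ((9 + Num.sqrt 21) / 5).
Definition w_p (R : rcfType) : R := 1 + 2^-1 * Num.sqrt ((9 + Num.sqrt 21) / 5).
Definition wh_m (R : rcfType) : R := 1 - 2^-1 * Num.sqrt ((9 - Num.sqrt 21) / 5).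
Definition wh_p (R : rcfType) : R := 1 + 2^-1 * Num.sqrt ((9 - Num.sqrt 21) / 5).
Definition z_m (R : rcfType) : R := 1 - Num.sqrt (2 / 5).
Definition z_p (R : rcfType) : R := 1 + Num.sqrt (2 / 5).

(* Spectrum (with algebraic multiplicities) encoded as the characteristic
   polynomial: 0, w-, z-^(4), wh-, 1^(8), wh+, z+^(4), w+, 2. *)
Definition specPoly (R : rcfType) : {poly R} :=
  ('X - 0%:P) * ('X - (w_m R)%:P) * ('X - (z_m R)%:P) ^+ 4 * ('X - (wh_m R)%:P)
  * ('X - 1%:P) ^+ 8
  * ('X - (wh_p R)%:P) * ('X - (z_p R)%:P) ^+ 4 * ('X - (w_p R)%:P) * ('X - 2%:P).

From HB Require Import structures.
From mathcomp Require Import all_boot all_order all_algebra all_fingroup.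
From mathcomp Require Import ring lra.
Set Implicit Arguments. Unset Strict Implicit. Unset Printing Implicit Defensive.
Import Order.TTheory GRing.Theory Num.Theory.
Local Open Scope ring_scope.

(* Both graphs are bipartite: the 15 subdivision vertices form one colour class
   and the 7 original vertices (the w_i and the two blocks) the other. If [c] is
   the random-walk matrix, the standard Laplacian is [1 - c] and [c] vanishes on
   the two diagonal blocks, so a Schur complement gives
     char(Delta) = (X - 1)^(15 - 7) * char(P)((X - 1)^2),
   where [P] is the two-step walk on the original vertices; negating [c], i.e.
   passing to the signless Laplacian, does not change [P]. For both partitions
   [P] is conjugate, by an explicit rational matrix, to one normal form whose
   characteristic polynomial is (X - 2/5)^4 (X - 1) (X^2 - 9/10 X + 3/20), and
   substituting (X - 1)^2 yields the claimed spectrum. The graphs are not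
   isomorphic because the block of size 4 for B is a vertex of degree 4, and the
   graph for A has none. *)

Lemma det_enum_reindex (R : comNzRingType) (T : finType) n (g : 'I_n -> T)
    (f : T -> T -> R) :
  #|T| = n -> injective g ->
  \det (\matrix_(i < #|T|, j < #|T|) f (enum_val i) (enum_val j)) =
  \det (\matrix_(i < n, j < n) f (g i) (g j)).
Proof.
move=> cardT g_inj; subst n.
have rank_g_inj : injective (fun i => enum_rank (g i)).
  by move=> i j /enum_rank_inj /g_inj.
set A := \matrix_(i, j) _.
have -> : \matrix_(i, j) f (g i) (g j) =
          row_perm (perm rank_g_inj) (col_perm (perm rank_g_inj) A).
  by apply/matrixP => i j; rewrite !mxE !permE /= !enum_rankK.
rewrite row_permE col_permE !det_mulmx !det_perm odd_permV.
by rewrite mulrCA -signr_addb addbb mulr1.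
Qed.

Lemma det_block_scalar (R : comNzRingType) m n (a : R)
    (B : 'M[R]_(m, n)) (C : 'M[R]_(n, m)) :
  \det (block_mx a%:M B C a%:M) * a ^+ n = a ^+ m * \det ((a * a)%:M - C *m B).
Proof.
have reduce : block_mx a%:M B C a%:M *m block_mx 1%:M (- B) 0 a%:M
              = block_mx a%:M 0 C ((a * a)%:M - C *m B).
  rewrite mulmx_block !mulmx1 !mulmx0 !addr0 mul_mx_scalar mul_scalar_mx.
  by rewrite scalerN addNr mulmxN -scalar_mxM addrC.
have := congr1 determinant reduce.
by rewrite det_mulmx det_ublock det_lblock !det_scalar expr1n mul1r.
Qed.

Section BipartiteCharPoly.

Variables (R : fieldType) (T : finType) (m n : nat).
Variables (S : m.-tuple T) (K : n.-tuple T).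
Hypothesis SK_enum : perm_eq (S ++ K) (enum T).

Lemma card_bipartition : #|T| = (m + n)%N.
Proof. by rewrite cardE -(perm_size SK_enum) size_cat !size_tuple. Qed.

Lemma deg_count_bipartition (adj : rel T) (v : T) :
  deg adj v = count (adj v) (S ++ K).
Proof.
rewrite /deg /nbhd cardsE (seq.permP SK_enum) cardE -size_filter; congr size.
by rewrite /enum_mem filter_predT.
Qed.

Let vertex (i : 'I_(m + n)) : T := tnth [tuple of S ++ K] i.

Let vertex_inj : injective vertex.
Proof. by apply/tuple_uniqP; rewrite (perm_uniq SK_enum) enum_uniq. Qed.

Variable c : T -> T -> R.
Hypothesis c_SS : forall u v, u \in S -> v \in S -> c u v = 0.
Hypothesis c_KK : forall u v, u \in K -> v \in K -> c u v = 0.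

Definition two_step : 'M[R]_n :=
  \matrix_(i, j) \sum_(k < m) c (tnth K i) (tnth S k) * c (tnth S k) (tnth K j).

Lemma char_poly_bipartite : (n <= m)%N ->
  char_poly (\matrix_(i < #|T|, j < #|T|) ((i == j)%:R - c (enum_val i) (enum_val j)))
  = ('X - 1) ^+ (m - n) * (char_poly two_step \Po ('X - 1) ^+ 2).
Proof.
move=> le_nm; set a : {poly R} := 'X - 1.
pose F u v : {poly R} := 'X *+ (u == v) - ((u == v)%:R - c u v)%:P.
rewrite {1}/char_poly {1}/char_poly_mx.
have -> : 'X%:M - map_mx polyC (\matrix_(i < #|T|, j < #|T|)
                    ((i == j)%:R - c (enum_val i) (enum_val j)))
          = \matrix_(i, j) F (enum_val i) (enum_val j).
  by apply/matrixP => i j; rewrite !mxE /F (inj_eq enum_val_inj).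
rewrite (det_enum_reindex F card_bipartition vertex_inj).
set M := \matrix_(i, j) F (vertex i) (vertex j).
have vertexL i : vertex (lshift n i) = tnth S i by exact: tnth_lshift.
have vertexR i : vertex (rshift m i) = tnth K i by exact: tnth_rshift.
have M_ul : ulsubmx M = a%:M.
  apply/matrixP => i j; rewrite !mxE !vertexL /F c_SS ?mem_tnth //.
  rewrite -!vertexL (inj_eq vertex_inj) eq_lshift.
  by case: (i == j); rewrite ?subr0 ?polyC1 ?polyC0.
have M_dr : drsubmx M = a%:M.
  apply/matrixP => i j; rewrite !mxE !vertexR /F c_KK ?mem_tnth //.
  rewrite -!vertexR (inj_eq vertex_inj) eq_rshift.
  by case: (i == j); rewrite ?subr0 ?polyC1 ?polyC0.
have M_off : dlsubmx M *m ursubmx M = map_mx polyC two_step.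
  apply/matrixP => i j; rewrite !mxE rmorph_sum; apply: eq_bigr => k _.
  rewrite !mxE /F -vertexL -vertexR !(inj_eq vertex_inj) eq_rlshift eq_lrshift.
  by rewrite !vertexL !vertexR !sub0r !polyCN !opprK -rmorphM.
have char_two_step :
    \det ((a * a)%:M - map_mx polyC two_step) = char_poly two_step \Po a ^+ 2.
  rewrite -det_map_mx; congr determinant.
  apply/matrixP => i j; rewrite !mxE.
  by rewrite raddfB raddfMn /= comp_polyX comp_polyC expr2.
have schur := det_block_scalar a (ursubmx M) (dlsubmx M).
rewrite M_off -M_ul -M_dr submxK char_two_step in schur.
have a_neq0 : a != 0 by rewrite /a -polyC1 polyXsubC_eq0.
apply: (mulIf (expf_neq0 n a_neq0)).
by rewrite schur mulrAC -exprD subnK.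
Qed.

End BipartiteCharPoly.

Lemma two_step_opp (R : fieldType) (T : finType) m n (S : m.-tuple T) (K : n.-tuple T)
    (c : T -> T -> R) :
  two_step S K (fun u v => - c u v) = two_step S K c.
Proof. by apply/matrixP => i j; rewrite !mxE; apply: eq_bigr => k _; rewrite mulrNN. Qed.

Definition transition (R : fieldType) (T : finType) (adj : rel T) (u v : T) : R :=
  (adj u v)%:R / (deg adj u)%:R.

Section BipartiteLaplacians.

Variables (R : fieldType) (T : finType) (m n : nat).
Variables (S : m.-tuple T) (K : n.-tuple T).
Hypothesis SK_enum : perm_eq (S ++ K) (enum T).
Hypothesis le_nm : (n <= m)%N.
Variable adj : rel T.
Hypothesis adj_SS : forall u v, u \in S -> v \in S -> adj u v = false.
Hypothesis adj_KK : forall u v, u \in K -> v \in K -> adj u v = false.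

Let transition_SS u v : u \in S -> v \in S -> transition R adj u v = 0.
Proof. by move=> u_S v_S; rewrite /transition adj_SS ?mul0r. Qed.

Let transition_KK u v : u \in K -> v \in K -> transition R adj u v = 0.
Proof. by move=> u_K v_K; rewrite /transition adj_KK ?mul0r. Qed.

Lemma char_poly_stdLap_bipartite :
  char_poly (stdLap R adj) =
  ('X - 1) ^+ (m - n) * (char_poly (two_step S K (transition R adj)) \Po ('X - 1) ^+ 2).
Proof. by rewrite -(char_poly_bipartite SK_enum transition_SS transition_KK le_nm). Qed.

Lemma char_poly_signlessLap_bipartite :
  char_poly (signlessLap R adj) =
  ('X - 1) ^+ (m - n) * (char_poly (two_step S K (transition R adj)) \Po ('X - 1) ^+ 2).
Proof.
have opp_SS u v : u \in S -> v \in S -> - transition R adj u v = 0.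
  by move=> u_S v_S; rewrite transition_SS ?oppr0.
have opp_KK u v : u \in K -> v \in K -> - transition R adj u v = 0.
  by move=> u_K v_K; rewrite transition_KK ?oppr0.
rewrite -two_step_opp -(char_poly_bipartite SK_enum opp_SS opp_KK le_nm).
by congr char_poly; apply/matrixP => i j; rewrite !mxE opprK.
Qed.

End BipartiteLaplacians.

Lemma deg_isomorphism (T1 T2 : finType) (adj1 : rel T1) (adj2 : rel T2) (f : T1 -> T2) :
  bijective f -> (forall x y, adj2 (f x) (f y) = adj1 x y) ->
  forall x, deg adj2 (f x) = deg adj1 x.
Proof.
move=> f_bij f_adj x; have f_inj := bij_inj f_bij; case: f_bij => g _ gK.
rewrite /deg -(card_imset _ f_inj); apply: eq_card => u.
by rewrite -[u]gK mem_imset // !inE f_adj.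
Qed.

Lemma stdLap_ratr (R : numFieldType) (T : finType) (adj : rel T) :
  stdLap R adj = map_mx ratr (stdLap rat adj).
Proof. by apply/matrixP => i j; rewrite !mxE rmorphB fmorph_div !rmorph_nat. Qed.

Lemma signlessLap_ratr (R : numFieldType) (T : finType) (adj : rel T) :
  signlessLap R adj = map_mx ratr (signlessLap rat adj).
Proof. by apply/matrixP => i j; rewrite !mxE rmorphD fmorph_div !rmorph_nat. Qed.

(* [vm_compute] cannot unfold the locked big operators; these computable
   forms are used to check rational matrix identities by evaluation. *)
Definition sum_iota (R : nzRingType) (h : nat -> R) (n : nat) : R :=
  foldr (fun k acc => h k + acc) 0 (iota 0 n).

Lemma big_ord_sum_iota (R : nzRingType) n (h : nat -> R) :
  \sum_(k < n) h k = sum_iota h n.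
Proof.
rewrite -(big_mkord xpredT) /index_iota subn0 /sum_iota.
by elim: (iota 0 n) => [|k s IH]; rewrite ?big_nil ?big_cons ?IH.
Qed.

Definition nat_mx (R : nzRingType) n (f : nat -> nat -> R) : 'M[R]_n :=
  \matrix_(i < n, j < n) f i j.

Lemma nat_mx_eq (R : nzRingType) n (f g : nat -> nat -> R) :
  all (fun i => all (fun j => f i j == g i j) (iota 0 n)) (iota 0 n) ->
  nat_mx n f = nat_mx n g.
Proof.
move=> /allP fg; apply/matrixP => i j; rewrite !mxE.
have iota_ord (k : 'I_n) : (k : nat) \in iota 0 n by rewrite mem_iota ltn_ord.
by have /allP/(_ j (iota_ord j))/eqP := fg i (iota_ord i).
Qed.

Lemma mul_nat_mx (R : nzRingType) n (f g : nat -> nat -> R) :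
  nat_mx n f *m nat_mx n g = nat_mx n (fun i j => sum_iota (fun k => f i k * g k j) n).
Proof.
apply/matrixP => i j; rewrite !mxE -big_ord_sum_iota.
by apply: eq_bigr => k _; rewrite !mxE.
Qed.

Lemma nat_mx1 (R : nzRingType) n : 1%:M = nat_mx n (fun i j => (i == j)%:R) :> 'M[R]_n.
Proof. by apply/matrixP => i j; rewrite !mxE. Qed.

Definition entry (rows : seq (seq rat)) (i j : nat) : rat := nth 0 (nth [::] rows i) j.

Lemma char_poly_similar (R : comNzRingType) n (P Q Qinv N : 'M[R]_n) :
  Qinv *m Q = 1%:M -> P *m Q = Q *m N -> char_poly P = char_poly N.
Proof.
move=> QinvK PQ.
have -> : N = Qinv *m P *m Q by rewrite -mulmxA PQ mulmxA QinvK mul1mx.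
have QinvK' : map_mx polyC Qinv *m map_mx polyC Q = 1%:M.
  by rewrite -map_mxM QinvK map_mx1.
rewrite /char_poly /char_poly_mx.
have -> : 'X%:M - map_mx polyC (Qinv *m P *m Q) =
          map_mx polyC Qinv *m ('X%:M - map_mx polyC P) *m map_mx polyC Q.
  by rewrite mulmxBr mulmxBl !map_mxM mul_mx_scalar -scalemxAl QinvK' scalemx1.
by rewrite !det_mulmx mulrAC -det_mulmx QinvK' det1 mul1r.
Qed.

Lemma char_poly_nat_mx_peel (R : comNzRingType) n (f : nat -> nat -> R) :
  all (fun j => f 0%N j == 0) (iota 1 n) ->
  char_poly (nat_mx n.+1 f) =
  ('X - (f 0%N 0%N)%:P) * char_poly (nat_mx n (fun i j => f i.+1 j.+1)).
Proof.
move=> /allP row0; rewrite /char_poly (expand_det_row _ 0) big_ord_recl big1 ?addr0.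
  rewrite /cofactor !mxE /= addn0 expr0 mul1r mulr1n; congr (_ * _).
  rewrite row'_col'_char_poly_mx; congr determinant; congr char_poly_mx.
  by apply/matrixP => i j; rewrite !mxE.
move=> j _; rewrite !mxE /=.
have -> : f 0%N (bump 0 j) = 0.
  by apply/eqP/row0; rewrite mem_iota /bump /= add1n ltnS ltn_ord.
by rewrite subr0 mulr0n mul0r.
Qed.

Lemma char_poly_nat_mx2 (R : comNzRingType) (f : nat -> nat -> R) :
  char_poly (nat_mx 2 f) =
  ('X - (f 0%N 0%N)%:P) * ('X - (f 1%N 1%N)%:P) - (f 0%N 1%N * f 1%N 0%N)%:P.
Proof.
rewrite /char_poly (expand_det_row _ 0) !big_ord_recl big_ord0 addr0.
rewrite /cofactor !det_mx11 !mxE /= /bump /= expr0 expr1 mulr1n mulr0n.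
by rewrite !sub0r !mul1r mulN1r opprK mulNr polyCM.
Qed.

Definition walk_poly (K : fieldType) : {poly K} :=
  ('X - (2/5)%:P) ^+ 4 * ('X - 1) * ('X ^+ 2 - (9/10)%:P * 'X + (3/20)%:P).

Definition lap_poly (K : fieldType) : {poly K} :=
  ('X - 1) ^+ 8 * (walk_poly K \Po ('X - 1) ^+ 2).

Lemma walk_poly_comp (K : fieldType) (q : {poly K}) :
  walk_poly K \Po q = (q - (2/5)%:P) ^+ 4 * (q - 1) * (q ^+ 2 - (9/10)%:P * q + (3/20)%:P).
Proof.
rewrite /walk_poly -!polyC1 !exprS !expr0 !(comp_polyM, comp_polyB, comp_polyD).
by rewrite !comp_polyX !comp_polyC polyC1.
Qed.

Lemma map_walk_poly (F K : fieldType) (f : {rmorphism F -> K}) :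
  map_poly f (walk_poly F) = walk_poly K.
Proof.
have f_ratio (p q : nat) : f (p%:R / q%:R) = p%:R / q%:R.
  by rewrite fmorph_div !rmorph_nat.
rewrite /walk_poly 2!rmorphM rmorphXn /= map_polyXsubC rmorphB /= map_polyX rmorph1.
rewrite rmorphD rmorphB rmorphXn /= map_polyX map_polyC mul_polyC map_polyZ map_polyX.
(* After [rmorphD] the constant term carries the additive coercion of [f],
   which [rewrite] does not unify with the one in [f_ratio]. *)
rewrite -mul_polyC !f_ratio; congr (_ * (_ + _%:P)); exact: f_ratio.
Qed.

Lemma map_lap_poly (F K : fieldType) (f : {rmorphism F -> K}) :
  map_poly f (lap_poly F) = lap_poly K.
Proof.
have map_Xsub1 : map_poly f ('X - 1) = 'X - 1 by rewrite rmorphB /= map_polyX rmorph1.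
by rewrite /lap_poly rmorphM /= map_comp_poly map_walk_poly !rmorphXn /= map_Xsub1.
Qed.

Lemma XsubC_1pm (R : comNzRingType) (u : R) :
  ('X - (1 - u)%:P) * ('X - (1 + u)%:P) = ('X - 1) ^+ 2 - (u ^+ 2)%:P.
Proof. ring. Qed.

Lemma lap_poly_spec (R : rcfType) : lap_poly R = specPoly R.
Proof.
set Y : {poly R} := ('X - 1) ^+ 2.
have pair_02 : ('X - 0%:P) * ('X - 2%:P) = Y - 1 by rewrite /Y; ring.
have pair_z : ('X - (z_m R)%:P) * ('X - (z_p R)%:P) = Y - (2/5)%:P.
  by rewrite XsubC_1pm sqr_sqrtr //; lra.
set r := Num.sqrt (21 : R).
have r_sq : r ^+ 2 = 21 by rewrite sqr_sqrtr.
have r_ge0 : 0 <= r by rewrite sqrtr_ge0.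
have r_le9 : r <= 9 by nra.
have pair_w (s : R) : 0 <= 9 + s ->
    ('X - (1 - 2^-1 * Num.sqrt ((9 + s) / 5))%:P)
    * ('X - (1 + 2^-1 * Num.sqrt ((9 + s) / 5))%:P) = Y - ((9 + s) / 20)%:P.
  move=> s_ge0; rewrite XsubC_1pm exprMn sqr_sqrtr; last by lra.
  by congr (_ - _%:P); field.
have quad_w : (('X - (w_m R)%:P) * ('X - (w_p R)%:P))
              * (('X - (wh_m R)%:P) * ('X - (wh_p R)%:P))
              = Y ^+ 2 - (9/10)%:P * Y + (3/20)%:P.
  rewrite /w_m /w_p /wh_m /wh_p -/r.
  rewrite (pair_w r); last by lra.
  rewrite (pair_w (- r)); last by lra.
  have vieta (a b : R) : (Y - a%:P) * (Y - b%:P) = Y ^+ 2 - (a + b)%:P * Y + (a * b)%:P.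
    ring.
  rewrite vieta; congr (_ - _%:P * _ + _%:P); first by field.
  have -> : (9 + r) / 20 * ((9 - r) / 20) = (81 - r ^+ 2) / 400 :> R by field.
  by rewrite r_sq; field.
rewrite /lap_poly walk_poly_comp /specPoly -pair_02 -pair_z -quad_w.
ring.
Qed.

Notation O5 k := (@Ordinal 5 k erefl).
Notation E i j := (@exist _ (fun p : 'I_5 * 'I_5 => (p.1 < p.2)%N) (O5 i, O5 j) erefl).

Definition subdivV : 15.-tuple SK5V :=
  [tuple mv (E 0 1); mv (E 0 2); mv (E 0 3); mv (E 0 4); mv (E 1 2); mv (E 1 3);
         mv (E 1 4); mv (E 2 3); mv (E 2 4); mv (E 3 4);
         pv (O5 0); pv (O5 1); pv (O5 2); pv (O5 3); pv (O5 4)].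

Definition origV : 7.-tuple SK5V :=
  [tuple wv (O5 0); wv (O5 1); wv (O5 2); wv (O5 3); wv (O5 4); vb false; vb true].

Lemma SK5_bipartition : perm_eq (subdivV ++ origV) (enum SK5V).
Proof.
apply: uniq_perm; [by vm_compute | exact: enum_uniq | move=> x].
rewrite mem_enum; case: x => [[i|[[i j] lt_ij]]|[i|b]].
- by case: i => [[|[|[|[|[|k]]]]] ?].
- by move: lt_ij; case: i => [[|[|[|[|[|k]]]]] ?]; case: j => [[|[|[|[|[|l]]]]] ?].
- by case: i => [[|[|[|[|[|k]]]]] ?].
- by case: b.
Qed.

Lemma SK5adj_subdivV part u v :
  u \in subdivV -> v \in subdivV -> SK5adj part u v = false.
Proof.
have : all (fun u => all (fun v => ~~ SK5adj part u v) subdivV) subdivV by vm_compute.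
by move=> /allP adj0 /adj0 /allP adj0u /adj0u /negbTE.
Qed.

Lemma SK5adj_origV part u v :
  u \in origV -> v \in origV -> SK5adj part u v = false.
Proof.
have : all (fun u => all (fun v => ~~ SK5adj part u v) origV) origV by vm_compute.
by move=> /allP adj0 /adj0 /allP adj0u /adj0u /negbTE.
Qed.

Definition transition_count part (u v : SK5V) : rat :=
  (SK5adj part u v)%:R / (count (SK5adj part u) (subdivV ++ origV))%:R.

Definition two_step_entry part (i j : nat) : rat :=
  sum_iota (fun k => transition_count part (nth (vb false) origV i) (nth (vb false) subdivV k)
                   * transition_count part (nth (vb false) subdivV k) (nth (vb false) origV j)) 15.

Lemma two_step_SK5 part :
  two_step subdivV origV (transition rat (SK5adj part)) = nat_mx 7 (two_step_entry part).
Proof.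
apply/matrixP => i j; rewrite !mxE /two_step_entry -big_ord_sum_iota; apply: eq_bigr => k _.
by rewrite /transition !(deg_count_bipartition SK5_bipartition) !(tnth_nth (vb false)).
Qed.

Definition walk_normal_form : 'M[rat]_7 := nat_mx 7 (entry
  [:: [:: 2/5; 0; 0; 0; 0; 0; 0];
      [:: 0; 2/5; 0; 0; 0; 0; 0];
      [:: 0; 0; 2/5; 0; 0; 0; 0];
      [:: 0; 0; 0; 2/5; 0; 0; 0];
      [:: 0; 0; 0; 0; 1; 0; 0];
      [:: 0; 0; 0; 0; 0; 0; -(3/20)];
      [:: 0; 0; 0; 0; 0; 1; 9/10]]).

Lemma char_poly_walk_normal_form : char_poly walk_normal_form = walk_poly rat.
Proof.
rewrite /walk_normal_form.
do 5 (rewrite char_poly_nat_mx_peel; last by vm_compute).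
rewrite char_poly_nat_mx2 /entry /= /walk_poly; ring.
Qed.

(* The first four columns of [QA] (resp. [QB]) are eigenvectors of the two-step
   walk for 2/5, the fifth for 1, and the last two span an invariant plane on
   which it acts by the companion matrix of X^2 - 9/10 X + 3/20. *)
Definition QA : 'M[rat]_7 := nat_mx 7 (entry
  [:: [:: -1; 0; 0; -(2/5); 1; -(3/2); -(3/5)];
      [:: 1; 0; 0; 0; 1; -(3/2); -(3/5)];
      [:: 0; -1; -1; -(3/5); 1; 1; 2/5];
      [:: 0; 1; 0; 0; 1; 1; 2/5];
      [:: 0; 0; 1; 0; 1; 1; 2/5];
      [:: 0; 0; 0; 1; 1; 0; 1/2];
      [:: 0; 0; 0; 1; 1; 0; -(3/4)]]).

Definition QA_inv : 'M[rat]_7 := nat_mx 7 (entry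
  [:: [:: -(7/15); 8/15; 1/30; 1/30; 1/30; -(1/10); -(1/15)];
      [:: 1/30; 1/30; -(3/10); 7/10; -(3/10); -(1/10); -(1/15)];
      [:: 1/30; 1/30; -(3/10); -(3/10); 7/10; -(1/10); -(1/15)];
      [:: -(1/6); -(1/6); -(1/6); -(1/6); -(1/6); 1/2; 1/3];
      [:: 1/6; 1/6; 1/6; 1/6; 1/6; 1/10; 1/15];
      [:: -(1/5); -(1/5); 2/15; 2/15; 2/15; -(8/25); 8/25];
      [:: 0; 0; 0; 0; 0; 4/5; -(4/5)]]).

Definition QB : 'M[rat]_7 := nat_mx 7 (entry
  [:: [:: 0; 0; 0; -(1/5); 1; -4; -(8/5)];
      [:: -1; -1; -1; -(4/5); 1; 1; 2/5];
      [:: 1; 0; 0; 0; 1; 1; 2/5];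
      [:: 0; 1; 0; 0; 1; 1; 2/5];
      [:: 0; 0; 1; 0; 1; 1; 2/5];
      [:: 0; 0; 0; 1; 1; 0; 1/2];
      [:: 0; 0; 0; 1; 1; 0; -2]]).

Definition QB_inv : 'M[rat]_7 := nat_mx 7 (entry
  [:: [:: 1/30; -(13/60); 47/60; -(13/60); -(13/60); -(2/15); -(1/30)];
      [:: 1/30; -(13/60); -(13/60); 47/60; -(13/60); -(2/15); -(1/30)];
      [:: 1/30; -(13/60); -(13/60); -(13/60); 47/60; -(2/15); -(1/30)];
      [:: -(1/6); -(1/6); -(1/6); -(1/6); -(1/6); 2/3; 1/6];
      [:: 1/6; 1/6; 1/6; 1/6; 1/6; 2/15; 1/30];
      [:: -(1/5); 1/20; 1/20; 1/20; 1/20; -(4/25); 4/25];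
      [:: 0; 0; 0; 0; 0; 2/5; -(2/5)]]).

Lemma QA_invK : QA_inv *m QA = 1%:M.
Proof. by rewrite mul_nat_mx nat_mx1; apply: nat_mx_eq; vm_compute. Qed.

Lemma QB_invK : QB_inv *m QB = 1%:M.
Proof. by rewrite mul_nat_mx nat_mx1; apply: nat_mx_eq; vm_compute. Qed.

Definition two_step_A : 'M[rat]_7 := nat_mx 7 (entry
  [:: [:: 1/2; 1/10; 1/10; 1/10; 1/10; 0; 1/10];
      [:: 1/10; 1/2; 1/10; 1/10; 1/10; 0; 1/10];
      [:: 1/10; 1/10; 1/2; 1/10; 1/10; 1/10; 0];
      [:: 1/10; 1/10; 1/10; 1/2; 1/10; 1/10; 0];
      [:: 1/10; 1/10; 1/10; 1/10; 1/2; 1/10; 0];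
      [:: 0; 0; 1/6; 1/6; 1/6; 1/2; 0];
      [:: 1/4; 1/4; 0; 0; 0; 0; 1/2]]).

Definition two_step_B : 'M[rat]_7 := nat_mx 7 (entry
  [:: [:: 1/2; 1/10; 1/10; 1/10; 1/10; 0; 1/10];
      [:: 1/10; 1/2; 1/10; 1/10; 1/10; 1/10; 0];
      [:: 1/10; 1/10; 1/2; 1/10; 1/10; 1/10; 0];
      [:: 1/10; 1/10; 1/10; 1/2; 1/10; 1/10; 0];
      [:: 1/10; 1/10; 1/10; 1/10; 1/2; 1/10; 0];
      [:: 0; 1/8; 1/8; 1/8; 1/8; 1/2; 0];
      [:: 1/2; 0; 0; 0; 0; 0; 1/2]]).

Lemma two_step_SK5A : two_step subdivV origV (transition rat adjA) = two_step_A.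
Proof. by rewrite two_step_SK5; apply: nat_mx_eq; vm_compute. Qed.

Lemma two_step_SK5B : two_step subdivV origV (transition rat adjB) = two_step_B.
Proof. by rewrite two_step_SK5; apply: nat_mx_eq; vm_compute. Qed.

Lemma two_step_A_QA : two_step_A *m QA = QA *m walk_normal_form.
Proof. by rewrite !mul_nat_mx; apply: nat_mx_eq; vm_compute. Qed.

Lemma two_step_B_QB : two_step_B *m QB = QB *m walk_normal_form.
Proof. by rewrite !mul_nat_mx; apply: nat_mx_eq; vm_compute. Qed.

Lemma char_poly_two_step_SK5A :
  char_poly (two_step subdivV origV (transition rat adjA)) = walk_poly rat.
Proof.
by rewrite two_step_SK5A (char_poly_similar QA_invK two_step_A_QA) char_poly_walk_normal_form.
Qed.

Lemma char_poly_two_step_SK5B :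
  char_poly (two_step subdivV origV (transition rat adjB)) = walk_poly rat.
Proof.
by rewrite two_step_SK5B (char_poly_similar QB_invK two_step_B_QB) char_poly_walk_normal_form.
Qed.

Lemma char_poly_laplacians_SK5 part :
  char_poly (two_step subdivV origV (transition rat (SK5adj part))) = walk_poly rat ->
  char_poly (stdLap rat (SK5adj part)) = lap_poly rat /\
  char_poly (signlessLap rat (SK5adj part)) = lap_poly rat.
Proof.
move=> char_two_step.
have std := char_poly_stdLap_bipartite rat SK5_bipartition isT
              (@SK5adj_subdivV part) (@SK5adj_origV part).
have signless := char_poly_signlessLap_bipartite rat SK5_bipartition isT
                   (@SK5adj_subdivV part) (@SK5adj_origV part).
by rewrite std signless char_two_step.
Qed.

Lemma deg_SK5A_neq4 (v : SK5V) : deg adjA v != 4%N.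
Proof.
rewrite (deg_count_bipartition SK5_bipartition).
have : all (fun v => count (adjA v) (subdivV ++ origV) != 4%N) (subdivV ++ origV).
  by vm_compute.
by move=> /allP; apply; rewrite (perm_mem SK5_bipartition) mem_enum.
Qed.

Lemma deg_SK5B_block : deg adjB (vb false) = 4%N.
Proof. by rewrite (deg_count_bipartition SK5_bipartition); vm_compute. Qed.

Lemma SK5A_not_isomorphic_SK5B : ~ isomorphic adjA adjB.
Proof.
case=> f [f_bij f_adj]; have [g _ gK] := f_bij.
have := deg_isomorphism f_bij f_adj (g (vb false)).
by rewrite gK deg_SK5B_block => /esym/eqP; rewrite (negbTE (deg_SK5A_neq4 _)).
Qed.

Theorem mainTheorem9 (R : rcfType) :
  [/\ #|SK5V| = 22%N,
      ~ isomorphic adjA adjB,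
      char_poly (stdLap R adjA) = specPoly R,
      char_poly (stdLap R adjB) = specPoly R
    & char_poly (signlessLap R adjA) = char_poly (signlessLap R adjB)].
Proof.
have [stdA signlessA] := char_poly_laplacians_SK5 char_poly_two_step_SK5A.
have [stdB signlessB] := char_poly_laplacians_SK5 char_poly_two_step_SK5B.
split.
- exact: card_bipartition SK5_bipartition.
- exact: SK5A_not_isomorphic_SK5B.
- by rewrite stdLap_ratr -map_char_poly stdA map_lap_poly lap_poly_spec.
- by rewrite stdLap_ratr -map_char_poly stdB map_lap_poly lap_poly_spec.
- (* [!signlessLap_ratr] would loop: its right side contains its left side. *)
  rewrite (signlessLap_ratr R adjA) (signlessLap_ratr R adjB) -!map_char_poly.
  by rewrite signlessA signlessB.
Qed.
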